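(* Let $(G,k)$ be an instance of \textsc{Paw-free Edge Editing} with $k>0$ such that there is no independent set of $k+3$ vertices of $G$ all having the same neighborhood, and let $S$ be the set of vertices covered by a maximal (under inclusion) collection of pairwise edge-disjoint induced paws in $G$. If a vertex $x\in V(G)$ has at least $4k+6$ neighbors belonging to triangle-free connected components of $G-S$, then there is no solution $A$ of $(G,k)$ such that $x$ belongs to a connected component of $G\Delta A$ that is a complete multipartite graph.
   Context: The paw is the graph on four vertices $x_1,x_2,x_3,x_4$ with edges $x_1x_2,x_2x_3,x_1x_3,x_3x_4$; a graph is paw-free if it has no induced paw. For a set $A$ of unordered vertex pairs, $G\Delta A$ is the graph on $V(G)$ with edge set the symmetric difference of $E(G)$ and $A$. A solution of $(G,k)$ is a set $A$ of at most $k$ vertex pairs such that $G\Delta A$ is paw-free. A complete multipartite graph here means one with at least three nonempty parts (independent sets) and all edges between different parts. Neighborhoods are open neighborhoods. *)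

From mathcomp Require Import all_boot.
Set Implicit Arguments. Unset Strict Implicit. Unset Printing Implicit Defensive.

Section Defs.
Variable T : finType.

Definition simple_graph (g : rel T) := symmetric g /\ irreflexive g.

Definition nbhd (g : rel T) (v : T) : {set T} := [set w | g v w].

Definition independent (g : rel T) (I : {set T}) :=
  forall u v, u \in I -> v \in I -> ~~ g u v.

Definition induced_paw (g : rel T) (a b c d : T) :=
  [&& uniq [:: a; b; c; d], g a b, g b c, g a c, g c d, ~~ g a d & ~~ g b d].

Definition paw_free (g : rel T) := forall a b c d, ~~ induced_paw g a b c d.

(* vertex sets of induced paws (an induced paw is determined by its vertex set) *)
Definition is_paw_set (g : rel T) (X : {set T}) :=
  [exists a, exists b, exists c, exists d,
     induced_paw g a b c d && (X == [set a; b; c; d])].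

Definition share_edge (g : rel T) (X Y : {set T}) :=
  [exists u, exists v, [&& u \in X :&: Y, v \in X :&: Y & g u v]].

Definition paw_packing (g : rel T) (Q : {set {set T}}) :=
  [forall X in Q, is_paw_set g X] &&
  [forall X in Q, forall Y in Q, (X != Y) ==> ~~ share_edge g X Y].

Definition edit (g : rel T) (A : {set {set T}}) : rel T :=
  fun u v => (u != v) && (g u v (+) ([set u; v] \in A)).

Definition solution (g : rel T) (k : nat) (A : {set {set T}}) :=
  [/\ forall p, p \in A -> #|p| = 2, #|A| <= k & paw_free (edit g A)].

Definition component (g : rel T) (x : T) : {set T} := [set y | connect g x y].

Definition complete_multipartite_on (g : rel T) (C : {set T}) :=
  exists P : {set {set T}},
    [/\ partition P C, 3 <= #|P| &
        forall u v, u \in C -> v \in C -> g u v = (pblock P u != pblock P v)].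

Definition remove (g : rel T) (S : {set T}) : rel T :=
  fun u v => [&& g u v, u \notin S & v \notin S].

Definition triangle_free_on (g : rel T) (C : {set T}) :=
  forall a b c, a \in C -> b \in C -> c \in C -> ~~ [&& g a b, g b c & g a c].

End Defs.

(* Editing at most k pairs touches at most 2k vertices, so at least 2k + 6 of
   the given neighbours y of x keep all their edges.  In particular xy is kept,
   so they all lie in the complete multipartite component of x, and two of them
   are adjacent in G iff they lie in different parts.  If one part contains
   k + 3 of them, these form an independent set of vertices with the same
   neighbourhood in G.  Otherwise every part contains at most k + 2 of them, so
   three lie in pairwise different parts; they form a triangle of G - S inside
   the triangle-free component of G - S containing the first one. *)

From mathcomp Require Import all_boot zify.
Set Implicit Arguments. Unset Strict Implicit. Unset Printing Implicit Defensive.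

Section Counting.
Variable T : finType.

Lemma leq_card_bounded_fibers (rT : finType) (f : T -> rT) (N : {set T}) m :
  (forall j, #|[set z in N | f z == j]| <= m) -> #|N| <= m * #|f @: N|.
Proof.
move=> small; rewrite -sum1_card (partition_big_imset f) /= mulnC -sum_nat_const.
apply: leq_sum => j _; rewrite sum1dep_card.
by apply: leq_trans (small j); rewrite cardsE; apply: subset_leq_card; apply/subsetP.
Qed.

Lemma three_distinct_values (rT : finType) (f : T -> rT) (N : {set T}) m :
  (forall j, #|[set z in N | f z == j]| <= m) -> 2 * m < #|N| ->
  exists y0 y1 y2, [/\ y0 \in N, y1 \in N & y2 \in N] /\
                   [/\ f y0 != f y1, f y1 != f y2 & f y2 != f y0].
Proof.
move=> /leq_card_bounded_fibers leNm ltmN.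
have /card_gt2P[_ [_ [_ [[/imsetP[y0 N0 ->] /imsetP[y1 N1 ->] /imsetP[y2 N2 ->]] neq]]]] :
  2 < #|f @: N| by nia.
by exists y0, y1, y2.
Qed.

Lemma exists_subset_of_card (A : {set T}) n :
  n <= #|A| -> exists2 B : {set T}, B \subset A & #|B| = n.
Proof.
case/card_geqP => s [uniq_s <- sA]; exists [set z in s].
  by apply/subsetP => z; rewrite inE => /sA.
by rewrite cardsE (card_uniqP uniq_s).
Qed.

Lemma card_cover_pairs (A : {set {set T}}) :
  (forall p, p \in A -> #|p| = 2) -> #|cover A| <= 2 * #|A|.
Proof.
move=> A2; apply: leq_trans (leq_card_cover A).1 _.
by rewrite (eq_bigr (fun=> 2)) // sum_nat_const mulnC.
Qed.
End Counting.

Section Graphs.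
Variable T : finType.
Implicit Types (g h : rel T) (A : {set {set T}}).

Lemma component_edge_closed h x u v :
  u \in component h x -> h u v -> v \in component h x.
Proof. by rewrite !inE => xu /connect1; apply: connect_trans. Qed.

Lemma triangle_free_componentP h y :
  reflect (triangle_free_on h (component h y))
    [forall a, forall b, forall c,
       [&& a \in component h y, b \in component h y & c \in component h y] ==>
       ~~ [&& h a b, h b c & h a c]].
Proof.
apply: (iffP forallP) => [tf a b c aC bC cC | tf a].
  by move: (tf a) => /forallP/(_ b)/forallP/(_ c)/implyP; apply; rewrite aC bC cC.
by apply/forallP => b; apply/forallP => c; apply/implyP => /and3P[]; apply: tf.
Qed.

Lemma multipartite_component_same_block h x (P : {set {set T}}) u v :
  (forall u v, u \in component h x -> v \in component h x ->
     h u v = (pblock P u != pblock P v)) ->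
  u \in component h x -> v \in component h x -> pblock P u = pblock P v ->
  h u =1 h v.
Proof.
move=> hP uC vC uv w; case wC : (w \in component h x); first by rewrite !hP // uv.
have nonadj z : z \in component h x -> h z w = false.
  by move=> zC; apply: contraFF wC; apply: component_edge_closed.
by rewrite !nonadj.
Qed.

Lemma edit_sym g A : symmetric g -> symmetric (edit g A).
Proof. by move=> gsym u v; rewrite /edit eq_sym gsym setUC. Qed.

Lemma edit_untouched g A u :
  irreflexive g -> u \notin cover A -> edit g A u =1 g u.
Proof.
move=> girr uA v; rewrite /edit.
have -> : ([set u; v] \in A) = false.
  by apply: contraNF uA => uvA; apply/bigcupP; exists [set u; v]; rewrite ?set21.
by rewrite addbF; case: eqP => // ->; rewrite girr.
Qed.

Lemma triangle_in_component h a b c :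
  h a b -> h b c -> h a c -> ~ triangle_free_on h (component h a).
Proof.
move=> hab hbc hac /(_ a b c); rewrite !inE connect0 (connect1 hab) (connect1 hac).
by rewrite hab hbc hac => /(_ isT isT isT).
Qed.

End Graphs.

Section UntouchedNeighbours.
Variables (T : finType) (g : rel T) (A P : {set {set T}}) (x : T) (N : {set T}).
Hypotheses (gsym : symmetric g) (girr : irreflexive g).
Hypothesis blockP : forall u v,
  u \in component (edit g A) x -> v \in component (edit g A) x ->
  edit g A u v = (pblock P u != pblock P v).
Hypothesis N_untouched : {in N, forall y, g x y && (y \notin cover A)}.

Lemma untouched_nbr_in_component y : y \in N -> y \in component (edit g A) x.
Proof.
case/N_untouched/andP => gxy yA; rewrite inE; apply: connect1.
by rewrite (edit_sym A gsym) (edit_untouched girr yA) gsym.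
Qed.

Lemma untouched_nbrs_adj : {in N &, forall u v, g u v = (pblock P u != pblock P v)}.
Proof.
move=> u v uN vN; have /andP[_ uA] := N_untouched uN.
by rewrite -(edit_untouched girr uA) blockP ?untouched_nbr_in_component.
Qed.

Lemma untouched_nbrs_same_block u v :
  u \in N -> v \in N -> pblock P u = pblock P v -> nbhd g u = nbhd g v.
Proof.
move=> uN vN uv; have /andP[_ uA] := N_untouched uN; have /andP[_ vA] := N_untouched vN.
apply/setP => w; rewrite !inE -(edit_untouched girr uA) -(edit_untouched girr vA).
by apply: (multipartite_component_same_block blockP); rewrite ?untouched_nbr_in_component.
Qed.

Lemma untouched_nbrs_twins_or_triangle m : 2 * m < #|N| ->
  (exists I : {set T},
     [/\ #|I| = m.+1, independent g I & {in I &, forall u v, nbhd g u = nbhd g v}])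
  \/ exists y0 y1 y2, [/\ y0 \in N, y1 \in N & y2 \in N] /\ [/\ g y0 y1, g y1 y2 & g y0 y2].
Proof.
move=> bigN; pose part j := [set z in N | pblock P z == j].
case: (pickP (fun j => m < #|part j|)) => [j big_part | small_parts]; [left | right].
  have [I sI cardI] := exists_subset_of_card big_part.
  have IP z : z \in I -> z \in N /\ pblock P z = j.
    by move/(subsetP sI); rewrite inE => /andP[? /eqP].
  exists I; split=> // [u v /IP[uN uj] /IP[vN vj] | u v /IP[uN uj] /IP[vN vj]].
    by rewrite untouched_nbrs_adj // uj vj eqxx.
  by rewrite (untouched_nbrs_same_block uN vN) // uj vj.
have small_part j : #|part j| <= m by rewrite leqNgt small_parts.
have [y0 [y1 [y2 [[N0 N1 N2] [d01 d12 d20]]]]] := three_distinct_values small_part bigN.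
by exists y0, y1, y2; rewrite !untouched_nbrs_adj // d01 d12 eq_sym d20.
Qed.

End UntouchedNeighbours.

Theorem lemma7 (T : finType) (g : rel T) (k : nat) (Q : {set {set T}}) (x : T) :
  simple_graph g ->
  0 < k ->
  (forall I : {set T}, #|I| = k + 3 -> independent g I ->
     ~ (forall u v, u \in I -> v \in I -> nbhd g u = nbhd g v)) ->
  maxset (paw_packing g) Q ->
  let S := \bigcup_(X in Q) X in
  4 * k + 6 <= #|[set y | [&& g x y, y \notin S &
                    [forall a, forall b, forall c,
                       [&& a \in component (remove g S) y,
                           b \in component (remove g S) y &
                           c \in component (remove g S) y] ==>
                       ~~ [&& remove g S a b, remove g S b c & remove g S a c]]]]| ->
  ~ (exists A : {set {set T}}, solution g k A /\
       complete_multipartite_on (edit g A) (component (edit g A) x)).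
Proof.
move=> [gsym girr] _ no_twins _ S; set N := [set y | _].
move=> bigN [A [[A2 leAk _] [P [_ _ blockP]]]].
pose N' := N :\: cover A.
have N'_untouched : {in N', forall y, g x y && (y \notin cover A)}.
  by move=> y; rewrite !inE => /andP[-> /andP[->]].
have N'P y : y \in N' ->
    y \notin S /\ triangle_free_on (remove g S) (component (remove g S) y).
  by rewrite !inE => /andP[_ /and3P[_ -> /triangle_free_componentP]].
have bigN' : 2 * (k + 2) < #|N'|.
  have := card_cover_pairs A2; have := subset_leq_card (subsetIr N (cover A)).
  rewrite cardsD; lia.
case: (untouched_nbrs_twins_or_triangle gsym girr blockP N'_untouched bigN').
  by case=> I [cardI indepI twinsI]; apply: (no_twins I _ indepI twinsI); rewrite addnS.
case=> y0 [y1 [y2 [[N0 N1 N2] [g01 g12 g02]]]].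
have edgeS u v : u \in N' -> v \in N' -> g u v -> remove g S u v.
  by move=> /N'P[uS _] /N'P[vS _] guv; rewrite /remove guv uS vS.
have [_ tf0] := N'P y0 N0.
exact: triangle_in_component (edgeS _ _ N0 N1 g01) (edgeS _ _ N1 N2 g12)
                             (edgeS _ _ N0 N2 g02) tf0.
Qed.
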